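(* Let $\mathcal{C}\subseteq\mathbb{F}_q^n$ be a GQC code with orbit lengths $l_1,\dots,l_m$, let $\mathcal{H}=\{h_1,\dots,h_m\}$ be a Gröbner basis of $\overline{\mathcal{C}^\perp}$ (elements regarded in $M$ via $\pi$), and let $u\in M$. Then $\langle h_i,u\rangle\equiv 0$ (modulo $t^l-1$, with $l$ as in the definition of the scalar product) for all $1\le i\le m$ if and only if $u$ corresponds to a codeword of $\mathcal{C}$, i.e. $u\in\mathcal{C}$.
   Context: Let $q$ be a prime power. A linear code $\mathcal{C}\subseteq\mathbb{F}_q^n$ is a generalized quasi-cyclic (GQC) code with orbit lengths $l_1,\dots,l_m$ ($m<n$, $l_1+\dots+l_m=n$) if, writing each codeword as $c=(c_1,\dots,c_m)$ with blocks $c_i=(c_{i,0},\dots,c_{i,l_i-1})$ of length $l_i$, $\mathcal{C}$ is closed under the simultaneous local cyclic shift sending each block $c_i$ to $(c_{i,l_i-1},c_{i,0},\dots,c_{i,l_i-2})$. Identify $c$ with $(c_1(t),\dots,c_m(t))\in M:=\bigoplus_{i=1}^m\mathbb{F}_q[t]/(t^{l_i}-1)$, $c_i(t)=\sum_j c_{i,j}t^j$; then $\mathcal{C}$ is an $\mathbb{F}_q[t]$-submodule of $M$. Elements of $\mathbb{F}_q[t]/(t^{l_i}-1)$ are identified with their representatives of degree $<l_i$. Let $\pi:\mathbb{F}_q[t]^m\to M$ be the natural projection. The dual code $\mathcal{C}^\perp$ (standard bilinear form) is GQC with the same orbit lengths, and $\overline{\mathcal{C}^\perp}:=\pi^{-1}(\mathcal{C}^\perp)\subseteq\mathbb{F}_q[t]^m$;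 a Gröbner basis is taken with respect to any monomial ordering on $\mathbb{F}_q[t]^m$. For $a(t)=\sum_{j=0}^{l-1}a_jt^j\in\mathbb{F}_q[t]/(t^l-1)$ put $\widehat{a}(t):=a_0+a_{l-1}t+\dots+a_1t^{l-1}$. For $u,v\in M$ the scalar product is $\langle u,v\rangle:=\sum_{i=1}^m u_i(t)\widehat{v}_i(t)\sum_{k=0}^{l/l_i-1}t^{kl_i}\bmod(t^l-1)$, with $\widehat{v}_i$ computed in $\mathbb{F}_q[t]/(t^{l_i}-1)$ and $l$ the least common multiple of those $l_i$ for which both $u_i$ and $v_i$ are nonzero. *)

From HB Require Import structures.
From mathcomp Require Import all_boot all_order all_algebra.
Set Implicit Arguments. Unset Strict Implicit. Unset Printing Implicit Defensive.
Import GRing.Theory.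
Local Open Scope ring_scope.

Section GQC.
Variables (F : fieldType) (m : nat) (l : 'I_m -> nat).

(* Elements of F_q[t]^m (and, with degree bounds, of M). *)
Definition vec := {ffun 'I_m -> {poly F}}.

(* u lies in M = ⊕ F[t]/(t^{l_i}-1), identified with representatives of degree < l_i *)
Definition inM (u : vec) : Prop := forall i, (size (u i) <= l i)%N.

Definition piM (f : vec) : vec := [ffun i => f i %% ('X^(l i) - 1)].

Definition gqc_shift (c : vec) : vec :=
  [ffun i => \poly_(j < l i) (c i)`_((j + l i - 1) %% l i)].

(* linear code in F_q^n (n = sum l_i) written in block form *)
Definition linear_code (C : vec -> Prop) : Prop :=
  (forall c, C c -> inM c) /\ C 0 /\
  (forall (a : F) c d, C c -> C d -> C [ffun i => a *: c i + d i]).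

Definition GQC_code (C : vec -> Prop) : Prop :=
  linear_code C /\ (forall c, C c -> C (gqc_shift c)).

Definition std_form (c d : vec) : F :=
  \sum_(i < m) \sum_(j < l i) (c i)`_j * (d i)`_j.

Definition dual_code (C : vec -> Prop) (d : vec) : Prop :=
  inM d /\ forall c, C c -> std_form c d = 0.

Definition dual_preimage (C : vec -> Prop) (f : vec) : Prop :=
  dual_code C (piM f).

(* Monomials of F[t]^m are t^a e_i, encoded as (a, i). *)
Definition monomial := (nat * 'I_m)%type.

Definition monomial_order (lt : monomial -> monomial -> Prop) : Prop :=
  (forall x, ~ lt x x) /\
  (forall x y z, lt x y -> lt y z -> lt x z) /\
  (forall x y, x <> y -> lt x y \/ lt y x) /\
  well_founded lt /\
  (forall a b c (i j : 'I_m), lt (a, i) (b, j) -> lt (a + c, i)%N (b + c, j)%N).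

Definition is_LM (lt : monomial -> monomial -> Prop) (f : vec) (x : monomial) : Prop :=
  (f x.2)`_x.1 != 0 /\
  forall y : monomial, (f y.2)`_y.1 != 0 -> y = x \/ lt y x.

Definition groebner_basis (lt : monomial -> monomial -> Prop) (N : vec -> Prop)
    (k : nat) (G : 'I_k -> vec) : Prop :=
  (forall r, N (G r)) /\
  forall f, N f -> f != 0 ->
    exists r, exists x y : monomial,
      [/\ is_LM lt (G r) x, is_LM lt f y, x.2 = y.2 & (x.1 <= y.1)%N].

Definition polyhat (n : nat) (a : {poly F}) : {poly F} :=
  \poly_(j < n) a`_((n - j) %% n).

Definition sp_len (u v : vec) : nat :=
  \big[lcmn/1%N]_(i < m | (u i != 0) && (v i != 0)) l i.

Definition scalar_prod (u v : vec) : {poly F} :=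
  let L := sp_len u v in
  (\sum_(i < m) u i * polyhat (l i) (v i) *
     \sum_(k < L %/ l i) 'X^(k * l i)) %% ('X^L - 1).

End GQC.

(* The preimage of C^perp in F[t]^m is an F[t]-submodule: multiplication by t
   acts on M as the simultaneous cyclic shift, which preserves C^perp because
   it preserves C and the standard form, and has finite order.  Division by
   the Groebner basis therefore writes every element of that submodule as an
   F[t]-combination of the h_i, so C^perp is F-spanned by the shifts of the
   h_i.  On the other hand the coefficient of t^s in <h, u> is the standard
   form of h with the s-th shift of u, so <h_i, u> = 0 exactly when u is
   orthogonal to every shift of h_i.  The condition thus says that u lies in
   (C^perp)^perp, which is C since the code is finite dimensional. *)

From mathcomp Require Import all_boot all_order all_algebra.
From mathcomp Require Import zify ring.
From Stdlib Require Import ClassicalEpsilon.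
Import GRing.Theory.
Local Open Scope ring_scope.
Set Implicit Arguments. Unset Strict Implicit. Unset Printing Implicit Defensive.

Lemma modnD_mul_pred n a s : (0 < n)%N ->
  ((a + s * n.-1) %% n = (a + (n - s %% n)) %% n)%N.
Proof.
move=> n_gt0; apply/eqP; rewrite -(eqn_modDr (s %% n)) modnDmr -!addnA.
rewrite subnK ?(ltnW (ltn_pmod _ n_gt0)) // -mulnSr prednK // modnDr.
by rewrite addnC modnMDl.
Qed.

Section ModXnSub1.
Variable F : fieldType.
Implicit Types p : {poly F}.

Lemma size_Xn_sub1 n : (0 < n)%N -> size ('X^n - 1 : {poly F}) = n.+1.
Proof. by move=> n_gt0; rewrite -polyC1 size_XnsubC. Qed.

Lemma size_modp_Xn_sub1 n p : (0 < n)%N -> (size (p %% ('X^n - 1))%R <= n)%N.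
Proof.
by move=> n_gt0; rewrite -ltnS -(size_Xn_sub1 n_gt0) ltn_modp -size_poly_eq0 size_Xn_sub1.
Qed.

Lemma modp_sum d I (r : seq I) (P : pred I) (E : I -> {poly F}) :
  (\sum_(x <- r | P x) E x) %% d = \sum_(x <- r | P x) (E x %% d).
Proof. exact: (big_morph _ (modpD d) (mod0p d)). Qed.

Lemma modp_Xn_sub1 n j : (0 < n)%N -> ('X^j : {poly F}) %% ('X^n - 1) = 'X^(j %% n).
Proof.
move=> n_gt0; set q := (j %/ n)%N.
have [S XnqE] : exists S, ('X^n : {poly F}) ^+ q = S * ('X^n - 1) + 1.
  exists (\sum_(i < q) ('X^n) ^+ (q.-1 - i) * 1 ^+ i).
  by rewrite mulrC -subrXX expr1n subrK.
rewrite {1}(divn_eq j n) exprD mulnC exprM XnqE mulrDl mul1r mulrAC.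
rewrite modp_addl_mul_small // size_Xn_sub1 // size_polyXn ltnS ltn_pmod //.
Qed.

Lemma polyhat0 n : polyhat n (0 : {poly F}) = 0.
Proof. by apply/polyP => j; rewrite coef_poly !coef0 if_same. Qed.

Lemma coef_modp_polyhat n p (q : {poly F}) t :
  (0 < n)%N -> (size p <= n)%N -> (t < n)%N ->
  ((p * polyhat n q) %% ('X^n - 1))`_t = \sum_(a < n) p`_a * q`_((a + (n - t)) %% n).
Proof.
move=> n_gt0 size_p lt_tn.
have -> : p * polyhat n q =
    \sum_(a < n) \sum_(b < n) (p`_a * q`_((n - b) %% n)) *: 'X^(a + b).
  rewrite -[p in LHS](take_poly_id size_p) /take_poly /polyhat !poly_def mulr_suml.
  apply: eq_bigr => a _; rewrite mulr_sumr; apply: eq_bigr => b _.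
  by rewrite -scalerAl -scalerAr scalerA exprD.
rewrite modp_sum coef_sum; apply: eq_bigr => a _; rewrite modp_sum coef_sum.
under eq_bigr do rewrite modpZl coefZ modp_Xn_sub1 // coefXn -mulrA.
rewrite -mulr_sumr; congr (_ * _).
have lt_b0 : ((t + (n - a)) %% n < n)%N by apply: ltn_pmod.
have ab0_t : ((a + (t + (n - a)) %% n) %% n = t)%N.
  rewrite modnDmr addnCA subnKC ?modnDr ?modn_small //; exact: ltnW.
rewrite (bigD1 (Ordinal lt_b0)) //= ab0_t eqxx mulr1 big1 ?addr0.
  congr (q`_ _); apply/eqP; rewrite -(eqn_modDr ((t + (n - a)) %% n)).
  rewrite subnK ?(ltnW lt_b0) // modnn modnDmr.
  have -> : (a + (n - t) + (t + (n - a)) = 2 * n)%N by have := ltn_ord a; lia.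
  by rewrite modnMl.
move=> b ne_b; suff /negbTE -> : t != ((a + b) %% n)%N by rewrite mulr0.
apply: contra ne_b => /eqP t_ab; apply/eqP/val_inj => /=.
rewrite -(modn_small (ltn_ord b)); apply/eqP.
by rewrite -(eqn_modDl a) -t_ab -modnDmr ab0_t.
Qed.

Lemma coef_mul_sum_Xn n q p s : (0 < n)%N -> (size p <= n)%N ->
  (p * \sum_(k < q) 'X^(k * n))`_s = if (s < q * n)%N then p`_(s %% n) else 0.
Proof.
move=> n_gt0 size_p; rewrite mulr_sumr coef_sum.
have coef_k (k : 'I_q) :
    (p * 'X^(k * n))`_s = if k == (s %/ n)%N :> nat then p`_(s %% n) else 0.
  rewrite coefMXn; case: ltnP => [lt_s | le_s].
    by case: eqP => // k_s; rewrite k_s ltnNge leq_divM in lt_s.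
  case: eqP => [-> | ne_k]; first by rewrite {1}(divn_eq s n) addKn.
  apply: nth_default; rewrite (leq_trans size_p) // leqNgt; apply/negP => lt_sn.
  by apply: ne_k; rewrite -(subnKC le_s) divnMDl // divn_small // addn0.
rewrite (eq_bigr _ (fun k _ => coef_k k)); case: ltnP => [lt_s | le_s].
  have lt_sq : (s %/ n < q)%N by rewrite ltn_divLR.
  rewrite (bigD1 (Ordinal lt_sq)) //= eqxx big1 ?addr0 // => k ne_k.
  by rewrite ifN //; apply: contra ne_k => /eqP k_s; apply/eqP/val_inj.
rewrite big1 // => k _; case: eqP => // k_s.
by have := ltn_ord k; rewrite k_s ltn_divLR // ltnNge le_s.
Qed.

Lemma Xn_sub1_mul_sum n q :
  ('X^n - 1) * \sum_(k < q) 'X^(k * n) = 'X^(q * n) - 1 :> {poly F}.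
Proof.
elim: q => [|q IH]; first by rewrite big_ord0 mulr0 mul0n expr0 subrr.
by rewrite big_ord_recr /= mulrDr IH mulSn exprD; ring.
Qed.

Lemma modp_mul_sum_Xn n q p : (0 < n)%N -> (0 < q)%N ->
  (p * \sum_(k < q) 'X^(k * n)) %% ('X^(q * n) - 1)
  = (p %% ('X^n - 1)) * \sum_(k < q) 'X^(k * n).
Proof.
move=> n_gt0 q_gt0; have size_r := size_modp_Xn_sub1 p n_gt0.
rewrite {1}(divp_eq p ('X^n - 1)) mulrDl -mulrA Xn_sub1_mul_sum.
rewrite modp_addl_mul_small // size_Xn_sub1 ?muln_gt0 ?q_gt0 // ltnS.
by apply/leq_sizeP => s le_s; rewrite coef_mul_sum_Xn // ltnNge le_s.
Qed.

End ModXnSub1.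

Section GQCModule.
Variables (F : fieldType) (m : nat) (l : 'I_m -> nat).
Hypothesis l_gt0 : forall i, (0 < l i)%N.
Implicit Types (c d f g : vec F m).

Local Notation shift := (gqc_shift l).

Definition block_form c d i : F := \sum_(j < l i) (c i)`_j * (d i)`_j.

Lemma std_formE c d : std_form l c d = \sum_(i < m) block_form c d i.
Proof. by []. Qed.

Lemma coef_gqc_shift c i j :
  (shift c i)`_j = if (j < l i)%N then (c i)`_((j + l i - 1) %% l i) else 0.
Proof. by rewrite ffunE coef_poly. Qed.

Lemma coef_iter_gqc_shift k c i j : (j < l i)%N ->
  (iter k shift c i)`_j = (c i)`_((j + k * (l i).-1) %% l i).
Proof.
elim: k j => [|k IH] j lt_j; first by rewrite mul0n addn0 modn_small.
rewrite iterS coef_gqc_shift lt_j IH ?ltn_pmod // modnDml.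
by congr (_`_ (_ %% _)); rewrite mulSn; have := l_gt0 i; lia.
Qed.

Lemma iter_gqc_shift_eq0 k c i : c i = 0 -> iter k shift c i = 0.
Proof.
move=> ci0; elim: k => //= k IH; apply/polyP => j.
by rewrite coef_gqc_shift IH !coef0 if_same.
Qed.

Lemma inM_iter_gqc_shift k c : inM l c -> inM l (iter k shift c).
Proof. by case: k => //= k _ i; rewrite ffunE size_poly. Qed.

Lemma inM_coef_eq0 c i j : inM l c -> (l i <= j)%N -> (c i)`_j = 0.
Proof. by move=> c_M le_j; rewrite nth_default // (leq_trans (c_M i)). Qed.

Lemma iter_gqc_shift_modn k c i : inM l c ->
  iter k shift c i = iter (k %% l i) shift c i.
Proof.
move=> c_M; apply/polyP => j; case: (ltnP j (l i)) => [lt_j | le_j].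
  by rewrite !coef_iter_gqc_shift // -modnDmr -modnMml modnDmr.
by rewrite !(inM_coef_eq0 (inM_iter_gqc_shift _ c_M) le_j).
Qed.

Lemma iter_gqc_shift_id k c : inM l c -> (forall i, l i %| k)%N ->
  iter k shift c = c.
Proof.
by move=> c_M l_k; apply/ffunP => i; rewrite iter_gqc_shift_modn // (eqP (l_k i)).
Qed.

Lemma std_form_gqc_shift c d : std_form l (shift c) (shift d) = std_form l c d.
Proof.
apply: eq_bigr => i _; rewrite /block_form [RHS](reindex_inj (@ord_pred_inj (l i))).
by apply: eq_bigr => j _; rewrite !coef_gqc_shift ltn_ord subn1.
Qed.

Lemma std_form_iter k c d :
  std_form l (iter k shift c) (iter k shift d) = std_form l c d.
Proof. by elim: k => //= k IH; rewrite std_form_gqc_shift. Qed.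

(* The shift has order dividing [\prod_i l i] on [M], so its adjoint for the
   standard form is a power of itself. *)
Lemma std_form_iter_adjoint k c d : inM l c ->
  exists s, std_form l c (iter k shift d) = std_form l (iter s shift c) d.
Proof.
move=> c_M; pose P := (\prod_(i < m) l i)%N.
have P_gt0 : (0 < P)%N by rewrite prodn_gt0.
exists (k * P - k)%N; rewrite -[RHS](std_form_iter k) -iterD subnKC ?leq_pmulr //.
rewrite (iter_gqc_shift_id (k := k * P) c_M) // => i.
by rewrite dvdn_mull // /P (bigD1 i) //= dvdn_mulr.
Qed.

Lemma piMD f g : piM l (f + g) = piM l f + piM l g.
Proof. by apply/ffunP => i; rewrite !ffunE modpD. Qed.

Lemma piMZ (a : F) f : piM l (a *: f) = a *: piM l f.
Proof. by apply/ffunP => i; rewrite !ffunE modpZl. Qed.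

Lemma piM_sum I (r : seq I) (P : pred I) (G : I -> vec F m) :
  piM l (\sum_(x <- r | P x) G x) = \sum_(x <- r | P x) piM l (G x).
Proof.
apply: big_morph; first exact: piMD.
by apply/ffunP => i; rewrite !ffunE mod0p.
Qed.

Lemma piM_id f : inM l f -> piM l f = f.
Proof.
by move=> f_M; apply/ffunP => i; rewrite ffunE modp_small // size_Xn_sub1 // ltnS.
Qed.

Lemma piM_XM f : piM l [ffun i => 'X * f i] = shift (piM l f).
Proof.
apply/ffunP => i; rewrite !ffunE.
set n := l i; set r := f i %% ('X^n - 1).
have n_gt0 : (0 < n)%N := l_gt0 i.
have size_r : (size r <= n)%N := size_modp_Xn_sub1 (f i) n_gt0.
rewrite {1}(divp_eq (f i) ('X^n - 1)) mulrDr mulrA modpD modp_mull add0r.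
have -> : 'X * r = (r`_n.-1)%:P * ('X^n - 1) + \poly_(j < n) r`_((j + n - 1) %% n).
  apply/polyP => -[|j]; rewrite coefXM coefD coefCM coefB coefXn coef1 coef_poly /=.
    rewrite n_gt0 add0n subn1 modn_small ?prednK ?ltn_predL //.
    by rewrite eq_sym eqn0Ngt n_gt0 sub0r mulrN1 addNr.
  rewrite subr0; case: (ltngtP j.+1 n) => [lt_jn | lt_nj | <-] /=.
  - by rewrite mulr0 add0r addSn subn1 modnDr modn_small // ltnW.
  - by rewrite mulr0 add0r nth_default // (leq_trans size_r).
  - by rewrite mulr1 addr0.
by rewrite modp_addl_mul_small // size_Xn_sub1 // ltnS size_poly.
Qed.

Lemma piM_XnM k f : piM l [ffun i => 'X^k * f i] = iter k shift (piM l f).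
Proof.
elim: k => [|k IH]; first by congr (piM l _); apply/ffunP => i; rewrite ffunE mul1r.
rewrite iterS -IH -piM_XM; congr (piM l _); apply/ffunP => i.
by rewrite !ffunE exprS mulrA.
Qed.

Lemma piM_polyM (p : {poly F}) f :
  piM l [ffun i => p * f i] = \sum_(k < size p) p`_k *: iter k shift (piM l f).
Proof.
have -> : [ffun i => p * f i] = \sum_(k < size p) p`_k *: [ffun i => 'X^k * f i].
  apply/ffunP => i; rewrite ffunE sum_ffunE -[p in LHS]coefK poly_def mulr_suml.
  by apply: eq_bigr => k _; rewrite !ffunE scalerAl.
by rewrite piM_sum; apply: eq_bigr => k _; rewrite piMZ piM_XnM.
Qed.

Lemma std_formDr c d1 d2 :
  std_form l c (d1 + d2) = std_form l c d1 + std_form l c d2.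
Proof.
rewrite /std_form -big_split; apply: eq_bigr => i _; rewrite -big_split.
by apply: eq_bigr => j _; rewrite ffunE coefD mulrDr.
Qed.

Lemma std_formZr (a : F) c d : std_form l c (a *: d) = a * std_form l c d.
Proof.
rewrite /std_form mulr_sumr; apply: eq_bigr => i _; rewrite mulr_sumr.
by apply: eq_bigr => j _; rewrite ffunE coefZ mulrCA.
Qed.

Lemma std_form_sumr c I (r : seq I) (P : pred I) (G : I -> vec F m) :
  std_form l c (\sum_(x <- r | P x) G x) = \sum_(x <- r | P x) std_form l c (G x).
Proof.
apply: big_morph; first exact: std_formDr.
by rewrite /std_form big1 // => i _; rewrite big1 // => j _; rewrite ffunE coef0 mulr0.
Qed.

End GQCModule.

Section ScalarProduct.
Variables (F : fieldType) (m : nat) (l : 'I_m -> nat).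
Hypothesis l_gt0 : forall i, (0 < l i)%N.
Implicit Types (h u : vec F m).

Local Notation shift := (gqc_shift l).

Lemma sp_len_gt0 h u : (0 < sp_len l h u)%N.
Proof. by apply: (big_ind (leq 1)) => // a b; rewrite lcmn_gt0 => ->. Qed.

Lemma dvdn_sp_len h u i : (h i != 0) && (u i != 0) -> (l i %| sp_len l h u)%N.
Proof. by move=> act; apply: (biglcmn_sup i act). Qed.

Lemma block_form_inactive h u i s : ~~ ((h i != 0) && (u i != 0)) ->
  block_form l (iter s shift u) h i = 0.
Proof.
rewrite negb_and !negbK => /orP[] /eqP i0; apply: big1 => j _.
  by rewrite i0 coef0 mulr0.
by rewrite iter_gqc_shift_eq0 // coef0 mul0r.
Qed.

Lemma coef_block_correlation h u i s : inM l h ->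
  ((h i * polyhat (l i) (u i)) %% ('X^(l i) - 1))`_(s %% l i)
  = block_form l (iter s shift u) h i.
Proof.
move=> h_M; rewrite coef_modp_polyhat ?ltn_pmod //; apply: eq_bigr => a _.
by rewrite coef_iter_gqc_shift // modnD_mul_pred // mulrC.
Qed.

Lemma coef_scalar_prod h u s : inM l h -> (s < sp_len l h u)%N ->
  (scalar_prod l h u)`_s = std_form l (iter s shift u) h.
Proof.
move=> h_M lt_s; rewrite /scalar_prod modp_sum coef_sum std_formE.
apply: eq_bigr => i _; have [act | inact] := boolP ((h i != 0) && (u i != 0)).
  have l_L := dvdn_sp_len act; have q_gt0 : (0 < sp_len l h u %/ l i)%N.
    by rewrite divn_gt0 // dvdn_leq // sp_len_gt0.
  rewrite -[X in 'X^X - 1](divnK l_L) modp_mul_sum_Xn //.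
  by rewrite coef_mul_sum_Xn ?size_modp_Xn_sub1 // divnK // lt_s coef_block_correlation.
rewrite block_form_inactive //; move: inact; rewrite negb_and !negbK.
by case/orP => /eqP ->; rewrite ?polyhat0 ?mulr0 !mul0r mod0p coef0.
Qed.

Lemma std_form_iter_modn h u s : inM l u ->
  std_form l (iter s shift u) h = std_form l (iter (s %% sp_len l h u) shift u) h.
Proof.
move=> u_M; rewrite !std_formE; apply: eq_bigr => i _.
have [act | inact] := boolP ((h i != 0) && (u i != 0)); last first.
  by rewrite !block_form_inactive.
rewrite /block_form iter_gqc_shift_modn // [in RHS]iter_gqc_shift_modn //.
by rewrite modn_dvdm // dvdn_sp_len.
Qed.

Lemma scalar_prod_eq0P h u : inM l h -> inM l u ->
  scalar_prod l h u = 0 <-> forall s, std_form l (iter s shift u) h = 0.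
Proof.
move=> h_M u_M; split=> [sp0 s | orth].
  by rewrite std_form_iter_modn // -coef_scalar_prod ?ltn_pmod ?sp_len_gt0 // sp0 coef0.
apply/polyP => s; rewrite coef0; case: (ltnP s (sp_len l h u)) => [lt_s | le_s].
  by rewrite coef_scalar_prod.
by apply: nth_default; rewrite (leq_trans _ le_s) // size_modp_Xn_sub1 // sp_len_gt0.
Qed.

End ScalarProduct.

Section DualCode.
Variables (F : fieldType) (m : nat) (l : 'I_m -> nat) (C : vec F m -> Prop).
Hypothesis l_gt0 : forall i, (0 < l i)%N.
Implicit Types (c d f g : vec F m).

Lemma dual_code_lin (a : F) d1 d2 :
  dual_code l C d1 -> dual_code l C d2 -> dual_code l C (a *: d1 + d2).
Proof.
move=> [d1_M d1_perp] [d2_M d2_perp]; split=> [i | c Cc].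
  rewrite !ffunE (leq_trans (size_polyD _ _)) // geq_max d2_M andbT.
  exact: leq_trans (size_scale_leq _ _) (d1_M i).
by rewrite std_formDr std_formZr d1_perp // d2_perp // mulr0 addr0.
Qed.

Lemma GQC_code_iter k c : GQC_code l C -> C c -> C (iter k (gqc_shift l) c).
Proof. by case=> _ C_shift Cc; elim: k => //= k; apply: C_shift. Qed.

Lemma dual_code_iter k d : GQC_code l C ->
  dual_code l C d -> dual_code l C (iter k (gqc_shift l) d).
Proof.
move=> C_GQC [d_M d_perp]; split=> [|c Cc]; first exact: inM_iter_gqc_shift.
have [s ->] := std_form_iter_adjoint l_gt0 k d (C_GQC.1.1 c Cc).
exact/d_perp/GQC_code_iter.
Qed.

Lemma dual_preimage_lin (a : F) f g :
  dual_preimage l C f -> dual_preimage l C g -> dual_preimage l C (a *: f + g).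
Proof. by rewrite /dual_preimage piMD piMZ; apply: dual_code_lin. Qed.

Lemma dual_preimage_XnM k f : GQC_code l C ->
  dual_preimage l C f -> dual_preimage l C [ffun i => 'X^k * f i].
Proof. by rewrite /dual_preimage piM_XnM //; apply: dual_code_iter. Qed.

End DualCode.

Section GroebnerSpan.
Variables (F : fieldType) (m k : nat) (lt : monomial m -> monomial m -> Prop).
Variables (N : vec F m -> Prop) (G : 'I_k -> vec F m).
Hypothesis lt_order : monomial_order lt.
Hypothesis N_lin : forall (a : F) f g, N f -> N g -> N (a *: f + g).
Hypothesis N_XnM : forall n f, N f -> N [ffun i => 'X^n * f i].
Hypothesis G_groebner : groebner_basis lt N G.
Implicit Types (f g : vec F m) (x y z : monomial m).

Definition poly_span f :=
  exists a : 'I_k -> {poly F}, f = [ffun i => \sum_(r < k) a r * G r i].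

Lemma poly_span0 : poly_span 0.
Proof.
by exists (fun=> 0); apply/ffunP => i; rewrite !ffunE big1 // => r _; rewrite mul0r.
Qed.

Lemma poly_span_add_monomial f (c : F) n r :
  poly_span f -> poly_span (f + c *: [ffun i => 'X^n * G r i]).
Proof.
move=> [a ->]; exists (fun s => a s + if s == r then c *: 'X^n else 0).
apply/ffunP => i; rewrite !ffunE; under [RHS]eq_bigr do rewrite mulrDl.
rewrite big_split /=; congr (_ + _).
rewrite (bigD1 r) //= eqxx big1 ?addr0 => [|s /negbTE ->]; last exact: mul0r.
by rewrite -scalerAl.
Qed.

Lemma is_LM_unique f x y : is_LM lt f x -> is_LM lt f y -> x = y.
Proof.
case: lt_order => lt_irr [lt_trans _] [fx x_max] [fy y_max].
case: (x_max y fy) => [-> //|lt_yx]; case: (y_max x fx) => [//|lt_xy].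
by case: (lt_irr x); apply: lt_trans lt_xy lt_yx.
Qed.

(* One division step: cancel the leading term of [f] by a monomial multiple of
   the basis element whose leading monomial divides it. *)
Lemma groebner_reduction f y : N f -> is_LM lt f y ->
  exists f', [/\ N f', forall z, (f' z.2)`_z.1 != 0 -> lt z y
               & poly_span f' -> poly_span f].
Proof.
case: lt_order => _ [_ [_ [_ lt_shift]]] Nf f_y.
have f0 : f != 0 by apply: contraTneq f_y.1 => ->; rewrite ffunE coef0 eqxx.
case: G_groebner => G_N /(_ f Nf f0).
move=> [r [[x1 i] [[y1 j] [G_x f_y' /= e_ij le_xy]]]]; subst j.
rewrite -(is_LM_unique f_y' f_y) {y f_y}.
set n := (y1 - x1)%N; set c := (f i)`_y1 / (G r i)`_x1.
have Gx0 : (G r i)`_x1 != 0 := G_x.1.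
exists (- c *: [ffun i => 'X^n * G r i] + f); split.
- by apply: N_lin; [apply: N_XnM | ].
- move=> [z1 h] /=; rewrite !ffunE coefD coefZ coefXnM.
  have [[-> ->] | ne_z] := eqVneq (z1, h) (y1, i).
    by rewrite ltnNge leq_subr subKn // mulNr divfK // addNr eqxx.
  move=> nz; have [fz0 | fz] := eqVneq (f h)`_z1 0; last first.
    by case: (f_y'.2 (z1, h) fz) => // eq_z; rewrite eq_z eqxx in ne_z.
  move: nz; rewrite fz0 addr0; case: ltnP => [_|le_nz]; first by rewrite mulr0 eqxx.
  rewrite mulf_eq0 negb_or => /andP[_ Gz].
  case: (G_x.2 ((z1 - n)%N, h) Gz) => [[e_z e_h] | lt_z].
    by move: ne_z; rewrite e_h -(subnK le_nz) e_z subnKC // eqxx.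
  by have := lt_shift _ _ n _ _ lt_z; rewrite subnK // subnKC.
- move=> /(poly_span_add_monomial c n r).
  by rewrite addrAC scaleNr addNr add0r.
Qed.

Lemma groebner_basis_span f : N f -> poly_span f.
Proof.
have LM_ex g : N g -> g != 0 -> exists y, is_LM lt g y.
  by case: G_groebner => _ /[apply] /[apply] -[_ [_ [y [_ g_y _ _]]]]; exists y.
move=> Nf; have [->|f0] := eqVneq f 0; first exact: poly_span0.
have [y f_y] := LM_ex f Nf f0; case: lt_order => _ [_ [_ [lt_wf _]]].
elim/(well_founded_ind lt_wf): y f Nf f0 f_y => y IH f Nf f0 f_y.
have [f' [Nf' below span_f]] := groebner_reduction Nf f_y.
apply: span_f; have [->|f'0] := eqVneq f' 0; first exact: poly_span0.
have [y' f'_y'] := LM_ex f' Nf' f'0.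
exact: IH y' (below _ f'_y'.1) f' Nf' f'0 f'_y'.
Qed.

End GroebnerSpan.

Lemma std_form_piM_span (F : fieldType) m k (l : 'I_m -> nat)
    (G : 'I_k -> vec F m) u f :
  (forall i, 0 < l i)%N -> poly_span G f ->
  (forall r s, std_form l u (iter s (gqc_shift l) (piM l (G r))) = 0) ->
  std_form l u (piM l f) = 0.
Proof.
move=> l_gt0 [a ->] u_perp.
have -> : [ffun i => \sum_(r < k) a r * G r i] = \sum_(r < k) [ffun i => a r * G r i].
  by apply/ffunP => i; rewrite ffunE sum_ffunE; apply: eq_bigr => r _; rewrite ffunE.
rewrite piM_sum std_form_sumr big1 // => r _.
by rewrite piM_polyM // std_form_sumr big1 // => s _; rewrite std_formZr u_perp mulr0.
Qed.

Lemma kermx_trK (F : fieldType) k n (A : 'M[F]_(k, n)) : (kermx (kermx A^T)^T == A)%MS.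
Proof.
have sub_A : (A <= kermx (kermx A^T)^T)%MS.
  by apply/sub_kermxP/trmx_inj; rewrite trmx_mul trmxK mulmx_ker trmx0.
apply/andP; split => //; have [_ <-] := mxrank_leqif_sup sub_A.
by rewrite mxrank_ker mxrank_tr mxrank_ker mxrank_tr subKn // rank_leq_col.
Qed.

Lemma row_space_of_subspace (F : finFieldType) n (P : 'rV[F]_n -> Prop) :
  P 0 -> (forall a x y, P x -> P y -> P (a *: x + y)) ->
  exists k (A : 'M[F]_(k, n)), forall x, (x <= A)%MS <-> P x.
Proof.
move=> P0 P_lin.
pose S := [set x | if excluded_middle_informative (P x) then true else false].
have inS x : x \in S <-> P x by rewrite inE; case: excluded_middle_informative.
exists #|S|, (\matrix_(r < #|S|) enum_val r) => x; split.
  move=> /submxP [w ->]; rewrite mulmx_sum_row.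
  apply: (big_ind P) => // [y z Py Pz | r _]; first by rewrite -[y]scale1r; apply: P_lin.
  by rewrite -[_ *: _]addr0 rowK; apply: P_lin => //; apply/inS/enum_valP.
by move/inS => Sx; rewrite -(enum_rankK_in Sx Sx) -(rowK (fun r => enum_val r)) row_sub.
Qed.

Section DoubleDual.
Variables (F : finFieldType) (m : nat) (l : 'I_m -> nat) (C : vec F m -> Prop).
Implicit Types (c d u : vec F m).

(* [F_q^n] with its coordinates indexed by the pairs (block, position). *)
Local Notation coord := {i : 'I_m & 'I_(l i)}.
Local Notation n := #|{: coord}|.

Definition vec_to_row c : 'rV[F]_n :=
  \row_k (let p : coord := enum_val k in (c (tag p))`_(tagged p)).

Definition row_to_vec (x : 'rV[F]_n) : vec F m :=
  [ffun i => \sum_(j < l i) x 0 (enum_rank (Tagged (fun i => 'I_(l i)) j)) *: 'X^j].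

Lemma coef_row_to_vec x i (j : 'I_(l i)) :
  (row_to_vec x i)`_j = x 0 (enum_rank (Tagged (fun i => 'I_(l i)) j)).
Proof.
rewrite ffunE coef_sum (bigD1 j) //= coefZ coefXn eqxx mulr1 big1 ?addr0 // => k ne_k.
rewrite coefZ coefXn; case: eqP => [/val_inj e | _]; last exact: mulr0.
by rewrite e eqxx in ne_k.
Qed.

Lemma inM_row_to_vec x : inM l (row_to_vec x).
Proof.
move=> i; apply/leq_sizeP => k le_k; rewrite ffunE coef_sum big1 // => j _.
by rewrite coefZ coefXn gtn_eqF ?mulr0 // (leq_trans (ltn_ord j)).
Qed.

Lemma row_to_vecK : cancel row_to_vec vec_to_row.
Proof.
move=> x; apply/rowP => k; rewrite mxE /= (coef_row_to_vec x (tagged (enum_val k))).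
by case: (enum_val k) (enum_valK k) => i j /= <-.
Qed.

Lemma vec_to_rowK c : inM l c -> row_to_vec (vec_to_row c) = c.
Proof.
move=> c_M; apply/ffunP => i; apply/polyP => j; case: (ltnP j (l i)) => [lt_j | le_j].
  by rewrite (coef_row_to_vec _ (Ordinal lt_j)) mxE enum_rankK.
by rewrite (inM_coef_eq0 (inM_row_to_vec _) le_j) (inM_coef_eq0 c_M le_j).
Qed.

Lemma row_to_vec_lin (a : F) x y :
  row_to_vec (a *: x + y) = a *: row_to_vec x + row_to_vec y.
Proof.
apply/ffunP => i; rewrite !ffunE scaler_sumr -big_split; apply: eq_bigr => j _.
by rewrite !mxE scalerDl scalerA.
Qed.

Lemma row_to_vec0 : row_to_vec 0 = 0.
Proof. by apply/ffunP => i; rewrite !ffunE big1 // => j _; rewrite mxE scale0r. Qed.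

Lemma std_form_row c d : std_form l c d = (vec_to_row c *m (vec_to_row d)^T) 0 0.
Proof.
rewrite mxE /std_form (sig_big_dep (fun _ => true) (fun _ _ => true)) /=.
rewrite (reindex (@enum_rank coord)); last exact/onW_bij/enum_rank_bij.
by apply: eq_bigr => p _; rewrite !mxE enum_rankK.
Qed.

Lemma linear_code_lin (a : F) c d : linear_code l C -> C c -> C d -> C (a *: c + d).
Proof.
case=> _ [_ C_lin] Cc Cd.
by have := C_lin a c d Cc Cd; congr C; apply/ffunP => i; rewrite !ffunE.
Qed.

Lemma dual_code_perp u : linear_code l C -> inM l u ->
  (forall d, dual_code l C d -> std_form l u d = 0) -> C u.
Proof.
move=> C_code u_M u_perp; have [C_M [C0 _]] := C_code.
have [k [A A_C]] : exists k (A : 'M_(k, _)), forall x, (x <= A)%MS <-> C (row_to_vec x).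
  apply: row_space_of_subspace => [|a x y Cx Cy]; first by rewrite row_to_vec0.
  by rewrite row_to_vec_lin; apply: linear_code_lin.
set K := kermx A^T.
have K_dual r : dual_code l C (row_to_vec (row r K)).
  split=> [|c Cc]; first exact: inM_row_to_vec.
  rewrite std_form_row row_to_vecK.
  have /submxP [w ->] : (vec_to_row c <= A)%MS.
    by apply/A_C; rewrite (vec_to_rowK (C_M c Cc)).
  rewrite -mulmxA -[A]trmxK -trmx_mul -row_mul mulmx_ker.
  by rewrite row0 trmx0 mulmx0 mxE.
have : (vec_to_row u <= kermx K^T)%MS.
  apply/sub_kermxP/rowP => r; rewrite !mxE -[RHS](u_perp _ (K_dual r)).
  by rewrite std_form_row row_to_vecK !mxE; apply: eq_bigr => j _; rewrite !mxE.
by rewrite (eqmxP (kermx_trK A)) => /A_C; rewrite vec_to_rowK.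
Qed.

End DoubleDual.

Theorem corollary1 (F : finFieldType) (m : nat) (l : 'I_m -> nat)
    (hl : forall i, (0 < l i)%N) (hmn : (m < \sum_(i < m) l i)%N)
    (C : vec F m -> Prop) (hC : GQC_code l C)
    (lt : monomial m -> monomial m -> Prop) (hlt : monomial_order lt)
    (H : 'I_m -> vec F m) (hH : groebner_basis lt (dual_preimage l C) H)
    (u : vec F m) (hu : inM l u) :
  (forall i : 'I_m, scalar_prod l (piM l (H i)) u = 0) <-> C u.
Proof.
(* [hmn] only rules out the degenerate case of all orbits of length 1. *)
have H_dual r : dual_code l C (piM l (H r)) := hH.1 r.
have H_M r : inM l (piM l (H r)) := (H_dual r).1.
split=> [H_perp | Cu i].
  apply: (dual_code_perp hC.1 hu) => d [d_M d_perp].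
  have d_N : dual_preimage l C d by rewrite /dual_preimage piM_id.
  have d_span := groebner_basis_span hlt (@dual_preimage_lin _ _ l C)
    (fun n f => @dual_preimage_XnM _ _ l C hl n f hC) hH d_N.
  rewrite -(piM_id hl d_M); apply: (std_form_piM_span hl d_span) => r s.
  have [s' ->] := std_form_iter_adjoint hl s (piM l (H r)) hu.
  exact: (scalar_prod_eq0P hl (H_M r) hu).1 (H_perp r) s'.
apply/(scalar_prod_eq0P hl (H_M i) hu) => s.
by apply: (H_dual i).2; apply: GQC_code_iter.
Qed.
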